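(* Every $(F,G)\in\mathcal F^{(1)}$ is a $1$-uniform dual pair; that is, $\langle f_i,g_i\rangle=\frac nN$ for all $1\le i\le N$.
   Context: $\mathcal H$ is a complex Hilbert space of finite dimension $n$, inner product linear in the first argument. A finite sequence $F=\{f_i\}_{i=1}^N$ in $\mathcal H$ is a frame if there are constants $0<A\le B$ with $A\|f\|^2\le\sum_{i=1}^N|\langle f,f_i\rangle|^2\le B\|f\|^2$ for all $f$. A sequence $G=\{g_i\}_{i=1}^N$ is a dual of $F$ if $f=\sum_{i=1}^N\langle f,g_i\rangle f_i$ for all $f$; then $(F,G)$ is an $(N,n)$ dual pair. A dual pair is $1$-uniform if $\langle f_i,g_i\rangle$ is independent of $i$. The error operator for $\Lambda\subseteq\{1,\dots,N\}$ is $E_{\Lambda,F,G}f=\sum_{i\in\Lambda}\langle f,f_i\rangle g_i$. With $\|T\|_{\mathcal F}=\sqrt{\operatorname{tr}(T^*T)}$, $\epsilon^{(1)}_{F,G}=\max_{1\le i\le N}\|E_{\{i\},F,G}\|_{\mathcal F}$, $\epsilon^{(1)}=\inf\{\epsilon^{(1)}_{F,G}:(F,G)\text{ an }(N,n)\text{ dual pair}\}$, $\mathcal F^{(1)}=\{(F,G):\epsilon^{(1)}_{F,G}=\epsilon^{(1)}\}$. *)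

From HB Require Import structures.
From mathcomp Require Import all_boot all_order all_algebra.
From mathcomp Require Import reals.
From mathcomp Require Import complex.
Set Implicit Arguments. Unset Strict Implicit. Unset Printing Implicit Defensive.
Import Order.TTheory GRing.Theory Num.Theory.
Local Open Scope ring_scope.

Section FrameDefs.
Variable R : realType.
Local Notation C := (R[i]).
Variables (n N : nat).

(* The n-dimensional complex Hilbert space is modelled as column vectors
   'cV[C]_n with the standard inner product, linear in the first argument. *)
Definition inner (x y : 'cV[C]_n) : C := \sum_(k < n) x k 0 * Num.conj (y k 0).

Definition adjmx m p (A : 'M[C]_(m, p)) : 'M[C]_(p, m) := (map_mx Num.conj A)^T.

Definition is_frame (F : 'I_N -> 'cV[C]_n) : Prop :=
  exists A B : R, 0 < A /\ A <= B /\
    forall f : 'cV[C]_n,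
      (A%:C)%C * inner f f <= \sum_(i < N) `|inner f (F i)| ^+ 2 /\
      \sum_(i < N) `|inner f (F i)| ^+ 2 <= (B%:C)%C * inner f f.

Definition is_dual (F G : 'I_N -> 'cV[C]_n) : Prop :=
  forall f : 'cV[C]_n, f = \sum_(i < N) inner f (G i) *: F i.

Definition dual_pair (F G : 'I_N -> 'cV[C]_n) : Prop := is_frame F /\ is_dual F G.

Definition one_uniform (F G : 'I_N -> 'cV[C]_n) : Prop :=
  forall i j : 'I_N, inner (F i) (G i) = inner (F j) (G j).

(* error operator E_{Lambda,F,G} f = sum_{i in Lambda} <f,f_i> g_i, as the
   matrix acting on column vectors: sum_{i in Lambda} g_i f_i^* *)
Definition err_op (F G : 'I_N -> 'cV[C]_n) (L : {set 'I_N}) : 'M[C]_n :=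
  \sum_(i in L) (G i *m adjmx (F i)).

Definition frob (T : 'M[C]_n) : C := sqrtC (\tr (adjmx T *m T)).

(* epsilon^(1)_{F,G} = max_i ||E_{{i},F,G}||_F  (all terms are >= 0) *)
Definition eps1 (F G : 'I_N -> 'cV[C]_n) : C :=
  \big[Num.max/0]_(i < N) frob (err_op F G [set i]).

Definition in_F1 (F G : 'I_N -> 'cV[C]_n) : Prop :=
  dual_pair F G /\
  forall F' G' : 'I_N -> 'cV[C]_n, dual_pair F' G' -> eps1 F G <= eps1 F' G'.

End FrameDefs.

(* For a dual pair, taking the trace of the identity gives
   \sum_i <f_i, g_i> = n, and by Cauchy-Schwarz
   |<f_i, g_i>| <= ||f_i|| ||g_i|| = ||E_{i}||_F <= eps1(F, G).
   The harmonic frame f_j = (w^(jk))_k, w a primitive N-th root of unity,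
   with dual g_j = f_j / N has ||E_{j}||_F = n/N for every j, so a minimiser
   has |<f_i, g_i>| <= c := n/N for all i, while these N numbers sum to N c.
   Then \sum_i |c - <f_i, g_i>|^2 <= \sum_i (2 c^2 - 2 c Re <f_i, g_i>) = 0. *)

From HB Require Import structures.
From mathcomp Require Import all_boot all_order all_algebra.
From mathcomp Require Import cyclic separable cyclotomic.
From mathcomp Require Import reals complex sesquilinear ring.
Import Order.TTheory GRing.Theory Num.Theory.
Local Open Scope ring_scope.
Set Implicit Arguments. Unset Strict Implicit. Unset Printing Implicit Defensive.

Section RootsOfUnity.
Variable C : numClosedFieldType.

Lemma prim_root_exists N : (0 < N)%N -> {w : C | N.-primitive_root w}.
Proof.
pose p : {poly C} := 'X^N - 1; have [r Dp] := closed_field_poly_normal p.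
move=> N_gt0; apply/sigW; rewrite (monicP _) ?monicXnsubC // scale1r in Dp.
have rN1: all N.-unity_root r by apply/allP=> z; rewrite -root_prod_XsubC -Dp.
have sz_r: (N < (size r).+1)%N.
  by rewrite -(size_prod_XsubC r id) -Dp size_XnsubC.
have [|z] := hasP (has_prim_root N_gt0 rN1 _ sz_r); last by exists z.
by rewrite -separable_prod_XsubC -Dp separable_Xn_sub_1 // pnatr_eq0 -lt0n.
Qed.

Lemma conjC_unity_root N (z : C) : (0 < N)%N -> z ^+ N = 1 -> z^* = z^-1.
Proof.
move=> N_gt0 zN1; have /eqP nz1 : `|z| == 1.
  by rewrite -(pexpr_eq1 N_gt0) // -normrX zN1 normr1.
by rewrite invC_norm nz1 expr1n invr1 mul1r.
Qed.

Lemma sum_unity_root_expr N (z : C) :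
  z ^+ N = 1 -> z != 1 -> \sum_(j < N) z ^+ j = 0.
Proof.
move=> zN1 z_neq1; have /eqP := subrX1 z N.
by rewrite zN1 subrr eq_sym mulf_eq0 subr_eq0 (negbTE z_neq1) => /eqP.
Qed.

Lemma sum_prim_root_orthogonal N (w : C) (k l : nat) :
  N.-primitive_root w -> (k < N)%N -> (l < N)%N ->
  \sum_(j < N) w ^+ (j * k) * (w ^+ (j * l))^* = (k == l)%:R * N%:R.
Proof.
move=> prim_w kN lN; have N_gt0 := prim_order_gt0 prim_w.
have wN1 := prim_expr_order prim_w.
have wl_neq0 : w ^+ l != 0 by rewrite expf_neq0 // (prim_root_eq0 prim_w) -lt0n.
set z := w ^+ k / w ^+ l.
have wXN1 m : (w ^+ m) ^+ N = 1 by rewrite -exprM mulnC exprM wN1 expr1n.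
have zN1 : z ^+ N = 1 by rewrite exprMn exprVn !wXN1 invr1 mulr1.
have term j : w ^+ (j * k) * (w ^+ (j * l))^* = z ^+ j.
  rewrite !(mulnC j) !exprM rmorphXn /= (conjC_unity_root N_gt0 (wXN1 l)).
  by rewrite /z exprMn !exprVn.
rewrite (eq_bigr (fun j : 'I_N => z ^+ j)) => [|j _]; last exact: term.
have [kl|k_neq_l] := eqVneq k l.
  rewrite /z kl divff // (eq_bigr (fun=> 1)) => [|j _]; last exact: expr1n.
  by rewrite sumr_const card_ord mul1r.
rewrite sum_unity_root_expr ?mul0r // /z; apply: contra k_neq_l.
rewrite (can2_eq (divfK wl_neq0) (mulfK wl_neq0)) mul1r.
rewrite (eq_prim_root_expr prim_w).
by rewrite !modn_small.
Qed.

End RootsOfUnity.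

Lemma le_bigmax_nneg (C : numDomainType) m (e : 'I_m -> C) :
  (forall i, 0 <= e i) -> forall i, e i <= \big[Num.max/0]_(j < m) e j.
Proof.
elim: m e => [|m IHm] e e_ge0 i; first by case: i.
rewrite big_ord_recl /=.
have M_ge0 : 0 <= \big[Num.max/0]_(j < m) e (lift ord0 j).
  by elim/big_ind: _ => // x y ? ?; rewrite maxEle; case: ifP.
rewrite comparable_le_max; last by rewrite real_comparable ?ger0_real.
case: (unliftP ord0 i) => [j ->|->]; last by rewrite lexx.
by rewrite IHm ?orbT.
Qed.

Lemma eq_of_norm_le_sum (C : numClosedFieldType) m (a : 'I_m -> C) (c : C) :
  (forall i, `|a i| <= c) -> \sum_i a i = m%:R * c -> forall i, a i = c.
Proof.
move=> a_le_c sum_a i0; have c_ge0 := le_trans (normr_ge0 _) (a_le_c i0).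
have c_real : c^* = c by apply/CrealP/ger0_real.
have dev_le i : (c - a i) * (c - a i)^* <= 2 * c ^+ 2 - (c * (a i)^* + a i * c).
  rewrite -subr_ge0 rmorphB /= c_real.
  have -> : 2 * c ^+ 2 - (c * (a i)^* + a i * c) - (c - a i) * (c - (a i)^*)
    = c ^+ 2 - `|a i| ^+ 2 by rewrite normCK; ring.
  by rewrite subr_ge0 lerXn2r ?nnegrE.
have sum_dev : \sum_i (c - a i) * (c - a i)^* <= 0.
  apply: le_trans (ler_sum _ (fun i _ => dev_le i)) _.
  rewrite sumrB sumr_const card_ord big_split /=.
  rewrite -mulr_sumr -mulr_suml -rmorph_sum.
  rewrite sum_a rmorphM /= c_real conjC_nat [_ - _](_ : _ = 0) //.
  by rewrite -mulr_natl; ring.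
have : \sum_i (c - a i) * (c - a i)^* == 0.
  by rewrite eq_le sum_dev sumr_ge0 // => i _; apply: mul_conjC_ge0.
rewrite psumr_eq0 => [|i _]; last exact: mul_conjC_ge0.
move=> /allP/(_ i0 (mem_index_enum _)).
by rewrite mul_conjC_eq0 subr_eq0 => /eqP.
Qed.

Section InnerDot.
Variables (R : realType) (n : nat).
Local Notation C := (R[i]).
Local Notation inner := (@inner R n).

Lemma inner_is_bilinear : bilinear_for (GRing.Scale.Law.clone _ _ *%R _)
  (GRing.Scale.Law.clone _ _ (Num.conj \; *%R) _) inner.
Proof.
split=> [y a x z|x a y z]; rewrite /inner /= mulr_sumr -big_split /=;
  apply: eq_bigr => k _; rewrite !mxE.
- ring.
- rewrite rmorphD rmorphM /=; ring.
Qed.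
HB.instance Definition _ :=
  bilinear_isBilinear.Build C _ _ _ _ _ inner inner_is_bilinear.

Lemma inner_is_hermitian (x y : 'cV[C]_n) :
  inner x y = (-1) ^+ false * (inner y x)^*.
Proof.
rewrite mul1r /inner rmorph_sum; apply: eq_bigr => k _.
by rewrite rmorphM /= conjCK mulrC.
Qed.
HB.instance Definition _ :=
  isHermitianSesquilinear.Build C _ false Num.conj inner inner_is_hermitian.

Lemma inner_gt0 (x : 'cV[C]_n) : x != 0 -> 0 < inner x x.
Proof.
move=> nz; rewrite lt_def psumr_eq0 => [|k _]; last exact: mul_conjC_ge0.
rewrite sumr_ge0 ?andbT => [|k _]; last exact: mul_conjC_ge0.
apply: contra nz => /allP x0; apply/eqP/matrixP => k j; rewrite (ord1 j) mxE.
by apply/eqP; rewrite -mul_conjC_eq0; apply: x0; rewrite mem_index_enum.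
Qed.
HB.instance Definition _ := isDotProduct.Build C _ inner inner_gt0.

End InnerDot.

Lemma adjmxZ (R : realType) m p (a : R[i]) (A : 'M[R[i]]_(m, p)) :
  adjmx (a *: A) = a^* *: adjmx A.
Proof. by apply/matrixP => k l; rewrite /adjmx !mxE rmorphM. Qed.

Section Frames.
Variables (R : realType) (n N : nat).
Local Notation C := (R[i]).
Implicit Types (F G : 'I_N -> 'cV[C]_n) (f : 'cV[C]_n).

Definition frame_mx F : 'M[C]_(n, N) := \matrix_(k, i) F i k 0.

Lemma frame_mxZ (a : C) F : frame_mx (fun i => a *: F i) = a *: frame_mx F.
Proof. by apply/matrixP => k i; rewrite !mxE. Qed.

Lemma frame_mx_synthesis F G f :
  \sum_i inner f (G i) *: F i = frame_mx F *m adjmx (frame_mx G) *m f.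
Proof.
apply/matrixP => k z; rewrite (ord1 z) summxE !mxE.
under [RHS]eq_bigr => l _ do rewrite !mxE mulr_suml.
rewrite exchange_big /=; apply: eq_bigr => i _.
rewrite !mxE /inner mulr_suml; apply: eq_bigr => l _; rewrite /adjmx !mxE; ring.
Qed.

Lemma is_dualP F G : is_dual F G <-> frame_mx F *m adjmx (frame_mx G) = 1%:M.
Proof.
split=> [dualFG|FG1 f]; last by rewrite frame_mx_synthesis FG1 mul1mx.
apply/matrixP => k l.
have /(congr1 (fun v : 'cV[C]_n => v k 0)) := dualFG (delta_mx l 0).
by rewrite frame_mx_synthesis -colE !mxE eqxx andbT => <-.
Qed.

Lemma trace_frame_mx F G :
  \tr (frame_mx F *m adjmx (frame_mx G)) = \sum_i inner (F i) (G i).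
Proof.
rewrite /mxtrace /inner exchange_big; apply: eq_bigr => k _.
by rewrite !mxE; apply: eq_bigr => i _; rewrite /adjmx !mxE.
Qed.

Lemma dual_sum_inner F G : is_dual F G -> \sum_i inner (F i) (G i) = n%:R.
Proof. by move/is_dualP; rewrite -trace_frame_mx => ->; rewrite mxtrace1. Qed.

Lemma dual_dim_le F G : is_dual F G -> (n <= N)%N.
Proof.
move/is_dualP => FG1; have := mxrankM_maxl (frame_mx F) (adjmx (frame_mx G)).
by rewrite FG1 mxrank1 => /leq_trans; apply; apply: rank_leq_col.
Qed.

Lemma sum_sqr_inner_frame F f :
  \sum_i `|inner f (F i)| ^+ 2 = inner f (frame_mx F *m adjmx (frame_mx F) *m f).
Proof.
rewrite -frame_mx_synthesis linear_sumr; apply: eq_bigr => i _.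
by rewrite linearZr_LR /= normCK mulrC.
Qed.

Lemma frob_err_op1 F G i :
  frob (err_op F G [set i]) = sqrtC (inner (F i) (F i) * inner (G i) (G i)).
Proof.
rewrite /frob /err_op big_set1 /mxtrace /inner mulr_suml; congr sqrtC.
apply: eq_bigr => k _; rewrite mxE mulr_sumr; apply: eq_bigr => l _.
rewrite /adjmx !mxE !big_ord1 !mxE rmorphM /= conjCK.
by rewrite (_ : 0 = ord0) //; ring.
Qed.

Lemma norm_inner_le_eps1 F G i : `|inner (F i) (G i)| <= eps1 F G.
Proof.
have frob_ge0 j : 0 <= frob (err_op F G [set j]).
  by rewrite frob_err_op1 sqrtC_ge0 mulr_ge0 ?dnorm_ge0.
apply: le_trans (le_bigmax_nneg frob_ge0 i).
rewrite frob_err_op1 sqrtCM ?nnegrE ?dnorm_ge0 //.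
exact: (CauchySchwarz_sqrt _ (F i) (G i)).1.
Qed.

End Frames.

Section HarmonicFrame.
Variables (R : realType) (n N : nat) (w : R[i]).
Hypothesis prim_w : N.-primitive_root w.
Local Notation C := (R[i]).

Definition harmonic_frame (j : 'I_N) : 'cV[C]_n := \col_(k < n) w ^+ (j * k).
Definition harmonic_dual (j : 'I_N) : 'cV[C]_n := N%:R^-1 *: harmonic_frame j.

Lemma N_neq0 : N%:R != 0 :> C.
Proof. by rewrite pnatr_eq0 -lt0n (prim_order_gt0 prim_w). Qed.

Lemma harmonic_frame_tight : (n <= N)%N ->
  frame_mx harmonic_frame *m adjmx (frame_mx harmonic_frame) = N%:R%:M.
Proof.
move=> le_nN; apply/matrixP => k l; rewrite !mxE -(mulr_natl _ (k == l)).
rewrite -(sum_prim_root_orthogonal prim_w) ?(leq_trans (ltn_ord _) le_nN) //.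
by apply: eq_bigr => j _; rewrite /adjmx !mxE.
Qed.

Lemma harmonic_dual_is_dual : (n <= N)%N -> is_dual harmonic_frame harmonic_dual.
Proof.
move=> le_nN; apply/is_dualP.
rewrite frame_mxZ adjmxZ -scalemxAr harmonic_frame_tight //.
by rewrite fmorphV rmorph_nat scale_scalar_mx mulVf ?N_neq0.
Qed.

Lemma harmonic_is_frame : (n <= N)%N -> is_frame harmonic_frame.
Proof.
move=> le_nN; exists N%:R, N%:R.
split; first by rewrite ltr0n (prim_order_gt0 prim_w).
split=> // f; rewrite sum_sqr_inner_frame harmonic_frame_tight // mul_scalar_mx.
by rewrite linearZr_LR /= conjC_nat rmorph_nat.
Qed.

Lemma harmonic_frame_norm j : inner (harmonic_frame j) (harmonic_frame j) = n%:R.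
Proof.
have wN1 := prim_expr_order prim_w.
have w_neq0 : w != 0.
  by rewrite (prim_root_eq0 prim_w) -lt0n (prim_order_gt0 prim_w).
rewrite /inner (eq_bigr (fun=> 1)) ?sumr_const ?card_ord // => k _.
rewrite mxE (conjC_unity_root (prim_order_gt0 prim_w)) ?mulfV ?expf_neq0 //.
by rewrite -exprM mulnC exprM wN1 expr1n.
Qed.

Lemma eps1_harmonic : eps1 harmonic_frame harmonic_dual <= n%:R / N%:R.
Proof.
apply: bigmax_le => [|j _]; first by rewrite divr_ge0 ?ler0n.
rewrite frob_err_op1 dnormZ /= !harmonic_frame_norm normfV normr_nat.
rewrite (_ : n%:R * _ = (n%:R / N%:R : C) ^+ 2); last by ring.
by rewrite sqrCK ?divr_ge0 ?ler0n.
Qed.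

End HarmonicFrame.

Theorem corollary3p4 (R : realType) (n N : nat) (F G : 'I_N -> 'cV[R[i]]_n) :
  in_F1 F G ->
  one_uniform F G /\ (forall i : 'I_N, inner (F i) (G i) = n%:R / N%:R).
Proof.
move=> [[_ dualFG] minFG].
suff inner_eq i : inner (F i) (G i) = n%:R / N%:R.
  by split=> // i j; rewrite !inner_eq.
have [n0|n_gt0] := posnP n; first by subst n; rewrite /inner big_ord0 mul0r.
have le_nN := dual_dim_le dualFG.
have [w prim_w] := prim_root_exists (R[i]) (leq_trans n_gt0 le_nN).
have harmonic_pair :=
  conj (harmonic_is_frame prim_w le_nN) (harmonic_dual_is_dual prim_w le_nN).
have eps1_le := le_trans (minFG _ _ harmonic_pair) (eps1_harmonic _ prim_w).
apply: (eq_of_norm_le_sum (a := fun j => inner (F j) (G j))) => [j|].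
  exact: le_trans (norm_inner_le_eps1 F G j) eps1_le.
by rewrite dual_sum_inner // mulrC divfK ?(N_neq0 prim_w).
Qed.
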